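(* For all $n\ge1$ and $k\ge1$, the greedy min-flip list $\mathcal{G}(n,k)$ has flip sequence $\sigma^k_n$; that is, if $\mathcal{G}(n,k)=G_1,\dots,G_N$ and $\sigma^k_n=f_1,\dots,f_{N'}$, then $N'=N-1$ and $G_{t+1}=\mathrm{flip}_{f_t}(G_t)$ for all $1\le t\le N-1$.
   Context: Fix integers $n\ge1$, $k\ge1$. A $k$-coloured permutation of $\{1,\dots,n\}$ is a sequence $\pi=p_1\cdots p_n$ with $p_i=v_i^{c_i}$, where $v_1\cdots v_n$ is a permutation of $\{1,\dots,n\}$ and each $c_i\in\{0,\dots,k-1\}$; the set of these is $\mathbf{C}(n,k)$. For $p=v^c$, $p^{+1}=v^{(c+1)\bmod k}$. For $1\le i\le n$, $\mathrm{flip}_i(p_1\cdots p_n)=p_i^{+1}p_{i-1}^{+1}\cdots p_1^{+1}p_{i+1}\cdots p_n$. The greedy min-flip list $\mathcal{G}(n,k)$ is produced as follows: start with $G_1=1^02^0\cdots n^0$; having produced $G_1,\dots,G_t$, let $i$ be the smallest integer in $\{1,\dots,n\}$ such that $\mathrm{flip}_i(G_t)\notin\{G_1,\dots,G_t\}$, and set $G_{t+1}=\mathrm{flip}_i(G_t)$; if no such $i$ exists, stop, and $\mathcal{G}(n,k)=G_1,\dots,G_t$. The sequence $\sigma^k_n$ is defined by $\sigma^k_1=1^{k-1}$ (the value $1$ repeated $k-1$ times; empty if $k=1$) and, for $n>1$, $\sigma^k_n=(\sigma^k_{n-1},n)^{kn-1},\sigma^k_{n-1}$, i.e. $kn-1$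 copies of the block ''$\sigma^k_{n-1}$ followed by $n$'', followed by one more copy of $\sigma^k_{n-1}$. *)

From mathcomp Require Import all_boot.
Set Implicit Arguments. Unset Strict Implicit. Unset Printing Implicit Defensive.

(* A k-coloured permutation p_1 ... p_n is a sequence of pairs (v_i, c_i):
   value v_i in {1..n} (the v_i forming a permutation) and colour c_i in {0..k-1}. *)
Definition cperm := seq (nat * nat).

Definition incr_col (k : nat) (p : nat * nat) : nat * nat := (p.1, (p.2.+1) %% k).

Definition flip (k i : nat) (pi : cperm) : cperm :=
  map (incr_col k) (rev (take i pi)) ++ drop i pi.

Definition start (n : nat) : cperm := [seq (v, 0) | v <- iota 1 n].

(* Step t -> t+1 (0-based index t in G) is the greedy min-flip step:
   i is the smallest in {1..n} with flip_i(G_t) not among G_1..G_t. *)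
Definition greedy_step (n k : nat) (G : seq cperm) (t : nat) : Prop :=
  exists i, [/\ 1 <= i <= n,
    nth [::] G t.+1 = flip k i (nth [::] G t),
    flip k i (nth [::] G t) \notin take t.+1 G &
    forall j, 1 <= j < i -> flip k j (nth [::] G t) \in take t.+1 G].

Definition greedy_list (n k : nat) (G : seq cperm) : Prop :=
  [/\ G <> [::], nth [::] G 0 = start n,
      forall t, t < (size G).-1 -> greedy_step n k G t &
      forall i, 1 <= i <= n -> flip k i (last [::] G) \in G].

(* sigma^k_1 = 1^{k-1};  sigma^k_n = (sigma^k_{n-1}, n)^{kn-1}, sigma^k_{n-1}.
   (sigma k 0 is an unused dummy value.) *)
Fixpoint sigma (k n : nat) : seq nat :=
  match n with
  | 0 => [::]
  | m.+1 =>
      if m is 0 then nseq k.-1 1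
      else flatten (nseq (k * m.+1).-1 (rcons (sigma k m) m.+1)) ++ sigma k m
  end.

From mathcomp Require Import all_boot.
From mathcomp Require Import zify.
Set Implicit Arguments. Unset Strict Implicit. Unset Printing Implicit Defensive.

(* Call a coloured permutation valid when its values are distinct and its
   colours are below k.  By induction on n we prove the cycle property: from any
   valid state p with at least n entries the flips sigma^k_n form a greedy walk,
   every flip of size at most n of its final state lands on a visited state, and
   flip n of the final state is p again.  For n+1, sigma^k_{n+1} consists of
   k(n+1) rounds of sigma^k_n separated by flips n+1.  Each round closes up to its
   start by flip n, so the separating flip n+1 acts as a "pull": it moves the
   (n+1)-th entry to the front with one more colour step.  The rounds never touch
   the (n+1)-th entry, and k(n+1) successive pulls give it k(n+1) distinct
   coloured values, so different rounds visit disjoint sets of states; hence the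
   greediness of the rounds is inherited, and after k(n+1) pulls p recurs.

   The theorem follows by running
   sigma^k_n from the start state and invoking uniqueness. *)

Section Walks.
Variables (T : eqType) (step : nat -> T -> T).

Fixpoint walk_end (fs : seq nat) (p : T) : T :=
  if fs is f :: fs' then walk_end fs' (step f p) else p.

Fixpoint walk_states (fs : seq nat) (p : T) : seq T :=
  if fs is f :: fs' then p :: walk_states fs' (step f p) else [::].

Definition walk (fs : seq nat) (p : T) : seq T :=
  rcons (walk_states fs p) (walk_end fs p).

Fixpoint greedy (V : seq T) (fs : seq nat) (p : T) : Prop :=
  if fs is f :: fs' then
    [/\ step f p \notin rcons V p,
        forall j, 0 < j < f -> step j p \in rcons V p
      & greedy (rcons V p) fs' (step f p)]
  else True.

Lemma walk_cons f fs p : walk (f :: fs) p = p :: walk fs (step f p).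
Proof. by []. Qed.

Lemma walk_cat a b p :
  walk (a ++ b) p = walk_states a p ++ walk b (walk_end a p).
Proof. by elim: a p => //= f a IH p; rewrite -IH. Qed.

Lemma walk_end_cat a b p : walk_end (a ++ b) p = walk_end b (walk_end a p).
Proof. by elim: a p => //= f a IH p. Qed.

Lemma size_walk fs p : size (walk fs p) = (size fs).+1.
Proof.
by rewrite /walk size_rcons; congr S; elim: fs p => //= f fs IH p; rewrite IH.
Qed.

Lemma nth_walk0 x0 fs p : nth x0 (walk fs p) 0 = p.
Proof. by case: fs. Qed.

Lemma mem_walk_head fs p : p \in walk fs p.
Proof. by case: fs => [|f fs]; rewrite /walk /= inE eqxx. Qed.

Lemma mem_walk_end fs p : walk_end fs p \in walk fs p.
Proof. by rewrite /walk mem_rcons inE eqxx. Qed.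

Lemma walk_invariant (P : T -> Prop) (fs : seq nat) p :
  P p -> (forall f q, f \in fs -> P q -> P (step f q)) ->
  forall q, q \in walk fs p -> P q.
Proof.
elim: fs p => [|f fs IH] p Pp Pstep q; first by rewrite inE => /eqP ->.
rewrite walk_cons inE => /orP [/eqP -> // | /IH]; apply.
- by apply: Pstep; rewrite ?inE ?eqxx.
- by move=> g r g_fs; apply: Pstep; rewrite inE g_fs orbT.
Qed.

Lemma greedy_cat V a b p :
  greedy V (a ++ b) p <-> greedy V a p /\ greedy (V ++ walk_states a p) b (walk_end a p).
Proof.
elim: a V p => [|f a IH] V p /=; first by rewrite cats0; tauto.
split.
  by case=> fresh least /IH [ga gb]; rewrite -cat_rcons.
by case=> [[fresh least ga] gb]; split => //; apply/IH; rewrite cat_rcons.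
Qed.

Lemma greedy_weaken (V W : seq T) fs p : greedy W fs p ->
  (forall q, q \in walk fs p -> q \notin V) -> greedy (V ++ W) fs p.
Proof.
elim: fs W p => [|f fs IH] W p //= [fresh least gfs] avoid.
rewrite rcons_cat; split.
- rewrite mem_cat negb_or fresh andbT; apply: avoid.
  by rewrite walk_cons inE mem_walk_head orbT.
- by move=> j j_lt; rewrite mem_cat least ?orbT.
- by apply: IH => // q q_walk; apply: avoid; rewrite walk_cons inE q_walk orbT.
Qed.

Lemma greedy_nth x0 V fs p t : greedy V fs p -> t < size fs ->
  let q := nth x0 (walk fs p) t in let f := nth 0 fs t in
  [/\ nth x0 (walk fs p) t.+1 = step f q,
      step f q \notin V ++ take t.+1 (walk fs p) &
      forall j, 0 < j < f -> step j q \in V ++ take t.+1 (walk fs p)].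
Proof.
elim: fs V p t => [|f fs IH] V p t //= [fresh least gfs] t_lt.
rewrite walk_cons; case: t t_lt => [|t] t_lt /=.
  by rewrite take0 nth_walk0 cats1.
by rewrite -cat_rcons; apply: IH.
Qed.

End Walks.

Section Flips.
Variable k : nat.
Hypothesis k_gt0 : 0 < k.
Local Notation inc := (incr_col k).

Lemma flip0 p : flip k 0 p = p.
Proof. by rewrite /flip take0 drop0. Qed.

Lemma size_flip i p : size (flip k i p) = size p.
Proof.
rewrite /flip size_cat size_map size_rev size_take size_drop.
by case: ltnP => ?; lia.
Qed.

Lemma drop_flip i m p : i <= m -> drop m (flip k i p) = drop m p.
Proof.
move=> i_le_m; rewrite /flip drop_cat size_map size_rev size_take.
case: (ltnP i (size p)) => i_size.
  by rewrite ltnNge i_le_m /= drop_drop; congr drop; lia.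
rewrite ltnNge (_ : size p <= m) /=; last lia.
by rewrite !drop_oversize ?size_drop //; lia.
Qed.

Definition valid (p : cperm) := uniq (map fst p) && all (fun x => x.2 < k) p.

Lemma valid_flip i p : valid p -> valid (flip k i p).
Proof.
case/andP=> uniq_p colours_p; apply/andP; split.
  rewrite /flip map_cat -map_comp (eq_map (_ : fst \o inc =1 fst)) // map_rev.
  have perm_values : perm_eq (rev (map fst (take i p)) ++ map fst (drop i p)) (map fst p).
    by rewrite -{3}(cat_take_drop i p) map_cat perm_cat2r perm_rev.
  by rewrite (perm_uniq perm_values).
apply/allP => x; rewrite mem_cat => /orP [/mapP [y _ ->] | /mem_drop].
  by rewrite /incr_col ltn_pmod.
by move/allP: colours_p; apply.
Qed.

(* pull n q moves the entry at position n (0-based) to the front, incrementing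
   its colour; it describes how flip n.+1 differs from flip n. *)
Definition pull n (q : cperm) : cperm :=
  inc (nth (0, 0) q n) :: take n q ++ drop n.+1 q.

Lemma flip_succ n u : n < size u -> flip k n.+1 u = pull n (flip k n u).
Proof.
move=> n_lt; rewrite /pull.
have size_head : size (map inc (rev (take n u))) = n.
  by rewrite size_map size_rev size_takel // ltnW.
rewrite drop_flip // {2 3}/flip nth_cat take_cat size_head ltnn subnn take0 cats0.
by rewrite nth_drop addn0 /flip (take_nth (0, 0) n_lt) rev_rcons.
Qed.

Lemma pull_cat n A B x d : size A + size B = n ->
  pull n (A ++ rcons B x ++ d) = inc x :: A ++ B ++ d.
Proof.
move=> size_AB; rewrite cat_rcons catA /pull nth_cat size_cat size_AB ltnn subnn.
rewrite take_size_cat ?size_cat // drop_cat size_cat size_AB ltnNge leqnSn /=.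
by rewrite subSnn drop1 -catA.
Qed.

Lemma iter_pull n m q : m <= n.+1 -> n < size q ->
  iter m (pull n) q =
    map inc (drop (n.+1 - m) (take n.+1 q)) ++ take (n.+1 - m) q ++ drop n.+1 q.
Proof.
move=> m_le n_lt; elim: m m_le => [|m IH] m_le.
  by rewrite subn0 /= drop_oversize ?cat_take_drop // size_takel.
rewrite iterS (IH (ltnW m_le)); set r := n.+1 - m.+1.
have -> : n.+1 - m = r.+1 by rewrite /r; lia.
rewrite (take_nth (0, 0) (_ : r < size q)); last by rewrite /r; lia.
rewrite pull_cat; last by rewrite size_map size_drop size_takel ?size_takel //; lia.
rewrite [drop r _](drop_nth (0, 0)) ?size_takel ?nth_take //; rewrite /r; lia.
Qed.

Lemma iter_pull_rounds n a q : n < size q ->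
  iter (a * n.+1) (pull n) q = map (iter a inc) (take n.+1 q) ++ drop n.+1 q.
Proof.
move=> n_lt; elim: a => [|a IH]; first by rewrite map_id cat_take_drop.
have size_head : size (map (iter a inc) (take n.+1 q)) = n.+1.
  by rewrite size_map size_takel.
rewrite mulSn iterD IH iter_pull ?size_cat ?size_head ?size_drop //; last lia.
by rewrite subnn drop0 take0 take_size_cat // drop_size_cat // -map_comp.
Qed.

Lemma nth_iter_pull_partial n m q : m <= n -> n < size q ->
  nth (0, 0) (iter m (pull n) q) n = nth (0, 0) q (n - m).
Proof.
move=> m_le n_lt; rewrite (iter_pull (leqW m_le) n_lt) nth_cat.
have size_moved : size (map inc (drop (n.+1 - m) (take n.+1 q))) = m.
  by rewrite size_map size_drop size_takel //; lia.
have size_kept : size (take (n.+1 - m) q) = n.+1 - m by rewrite size_takel //; lia.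
rewrite size_moved ltnNge (_ : m <= n) //= nth_cat size_kept ifT; last lia.
by rewrite nth_take //; lia.
Qed.

Lemma iter_inc a x : x.2 < k -> iter a inc x = (x.1, (x.2 + a) %% k).
Proof.
move=> x_col; elim: a => [|a IH]; first by rewrite addn0 modn_small //; case: x x_col.
by rewrite iterS IH /incr_col /= -addn1 modnDml addn1 addnS.
Qed.

Lemma nth_iter_pull n b q : n < size q ->
  nth (0, 0) (iter b (pull n) q) n =
    iter (b %/ n.+1) inc (nth (0, 0) q (n - b %% n.+1)).
Proof.
move=> n_lt; set a := b %/ n.+1; set m := b %% n.+1.
have m_le : m <= n by rewrite -ltnS ltn_pmod.
rewrite {1}(divn_eq b n.+1) addnC iterD nth_iter_pull_partial //; last first.
  by rewrite iter_pull_rounds // size_cat size_map size_takel // size_drop; lia.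
rewrite iter_pull_rounds // nth_cat size_map size_takel // ifT; last lia.
by rewrite (nth_map (0, 0)) ?size_takel ?nth_take //; lia.
Qed.

Section ValidPulls.
Variables (n : nat) (q : cperm).
Hypotheses (valid_q : valid q) (n_lt : n < size q).

Lemma colour_lt i : i < size q -> (nth (0, 0) q i).2 < k.
Proof. by case/andP: valid_q => _ /allP cols i_lt; apply/cols/mem_nth. Qed.

Lemma iter_pull_period : iter (k * n.+1) (pull n) q = q.
Proof.
rewrite iter_pull_rounds // map_id_in ?cat_take_drop // => x /mem_take x_q.
have x_col : x.2 < k by case/andP: valid_q => _ /allP; apply.
by rewrite iter_inc // modnDr modn_small //; case: x x_q x_col.
Qed.

Lemma iter_pull_inj b1 b2 : b1 < k * n.+1 -> b2 < k * n.+1 ->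
  nth (0, 0) (iter b1 (pull n) q) n = nth (0, 0) (iter b2 (pull n) q) n -> b1 = b2.
Proof.
move=> b1_lt b2_lt; rewrite !nth_iter_pull // !iter_inc ?colour_lt; try lia.
case=> same_value same_colour.
have same_pos : n - b1 %% n.+1 = n - b2 %% n.+1.
  apply/eqP; case/andP: valid_q => uniq_q _.
  rewrite -(nth_uniq 0 (s := map fst q)) ?size_map ?(nth_map (0, 0)) ?same_value //; lia.
have same_mod : b1 %% n.+1 = b2 %% n.+1.
  by move: (ltn_pmod b1 (ltn0Sn n)) (ltn_pmod b2 (ltn0Sn n)); lia.
have same_div : b1 %/ n.+1 = b2 %/ n.+1.
  have [div1 div2] : b1 %/ n.+1 < k /\ b2 %/ n.+1 < k by rewrite !ltn_divLR.
  apply/eqP; move: same_colour; rewrite same_pos => /eqP.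
  by rewrite eqn_modDl !modn_small.
by rewrite (divn_eq b1 n.+1) (divn_eq b2 n.+1) same_div same_mod.
Qed.

End ValidPulls.

(* The recursion defining sigma also holds at n = 1, with sigma k 0 = [::]. *)
Lemma sigmaS n :
  sigma k n.+1 = flatten (nseq (k * n.+1).-1 (rcons (sigma k n) n.+1)) ++ sigma k n.
Proof. by case: n => //; rewrite muln1 cats0 /=; elim: k.-1 => //= m ->. Qed.

Lemma sigma_range n : all (fun f => 0 < f <= n) (sigma k n).
Proof.
elim: n => // n IH; rewrite sigmaS.
have IH' : all (fun f => 0 < f <= n.+1) (sigma k n).
  by apply: sub_all IH => f /andP [f_gt0 f_le]; rewrite f_gt0 leqW.
rewrite all_cat IH' andbT; elim: (k * n.+1).-1 => //= m IHm.
by rewrite all_cat IHm all_rcons IH' ltnSn andbT.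
Qed.

Local Notation final fs p := (walk_end (flip k) fs p).
Local Notation trail fs p := (walk (flip k) fs p).

Definition sigma_cycle n := forall p, valid p -> n <= size p ->
  [/\ greedy (flip k) [::] (sigma k n) p,
      forall j, 0 < j <= n -> flip k j (final (sigma k n) p) \in trail (sigma k n) p
    & flip k n (final (sigma k n) p) = p].

Lemma sigma_cycle0 : sigma_cycle 0.
Proof. by move=> p _ _; split => //= [j|]; [lia | exact: flip0]. Qed.

Lemma trail_valid fs q r : valid q -> r \in trail fs q -> valid r /\ size r = size q.
Proof.
move=> valid_q; apply: (walk_invariant (P := fun r => valid r /\ size r = size q)) => //.
by move=> f r' _ [valid_r' <-]; rewrite valid_flip ?size_flip.
Qed.

Section CycleStep.
Variables (n : nat) (p : cperm).
Hypotheses (IH : sigma_cycle n) (valid_p : valid p) (n_lt : n < size p).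

Local Notation sg := (sigma k n).
Local Notation N := (k * n.+1).
(* sigma k n.+1 consists of N rounds of sg separated by flips n.+1; round b
   starts at the state s b. *)
Local Notation s b := (iter b (pull n) p).

(* Where sg would return to its start by flip n, flip n.+1 performs a pull. *)
Lemma pull_by_round q : valid q -> n < size q -> pull n q = flip k n.+1 (final sg q).
Proof.
move=> valid_q n_lt_q; have [_ _ back] := IH valid_q (ltnW n_lt_q).
have [_ size_final] := trail_valid valid_q (mem_walk_end _ sg q).
by rewrite flip_succ ?size_final // back.
Qed.

Lemma round_valid b : valid (s b) /\ n < size (s b).
Proof.
elim: b => [|b [valid_b size_b]] //; rewrite iterS pull_by_round //.
have [valid_final size_final] := trail_valid valid_b (mem_walk_end _ sg (s b)).
by rewrite valid_flip // size_flip size_final.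
Qed.

Lemma round_next b : s b.+1 = flip k n.+1 (final sg (s b)).
Proof. by have [valid_b size_b] := round_valid b; rewrite iterS pull_by_round. Qed.

Lemma round_entry b q : q \in trail sg (s b) -> nth (0, 0) q n = nth (0, 0) (s b) n.
Proof.
move=> q_round; have same_tail : drop n q = drop n (s b).
  apply: (walk_invariant (P := fun r => drop n r = drop n (s b))) q_round => // f r f_sg <-.
  by apply: drop_flip; move/allP: (sigma_range n) => /(_ f f_sg) /andP [].
by have := congr1 (fun r => nth (0, 0) r 0) same_tail; rewrite /= !nth_drop addn0.
Qed.

Definition visited b := flatten [seq trail sg (s c) | c <- iota 0 b].

Lemma visitedS b : visited b.+1 = visited b ++ trail sg (s b).
Proof. by rewrite /visited -addn1 iotaD map_cat flatten_cat /= cats0. Qed.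

Lemma visited_entry b q :
  q \in visited b -> exists2 c, c < b & nth (0, 0) q n = nth (0, 0) (s c) n.
Proof.
case/flattenP => _ /mapP [c c_b ->] q_round.
by exists c; [rewrite mem_iota in c_b | exact: round_entry].
Qed.

(* Since the entry at position n identifies the round, each of the first N
   rounds is greedy whatever was visited before. *)
Lemma round_greedy b : b < N -> greedy (flip k) (visited b) sg (s b).
Proof.
move=> b_lt; have [valid_b size_b] := round_valid b.
have [greedy_b _ _] := IH valid_b (ltnW size_b).
rewrite -(cats0 (visited b)); apply: (greedy_weaken (V := visited b) greedy_b) => q q_round.
apply/negP => /visited_entry [c c_lt same]; rewrite (round_entry q_round) in same.
by have := iter_pull_inj valid_p n_lt b_lt (ltn_trans c_lt b_lt) same; lia.
Qed.

Definition blocks m := flatten (nseq m (rcons sg n.+1)) ++ sg.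

Lemma blocksS m : blocks m.+1 = sg ++ n.+1 :: blocks m.
Proof. by rewrite /blocks /= -catA cat_rcons. Qed.

Lemma blocks_end m b : final (blocks m) (s b) = final sg (s (b + m)).
Proof.
elim: m b => [|m IHm] b; first by rewrite addn0.
by rewrite blocksS walk_end_cat /= -round_next IHm addSnnS.
Qed.

Lemma blocks_trail m b q :
  q \in trail sg (s (b + m)) -> q \in trail (blocks m) (s b).
Proof.
elim: m b => [|m IHm] b; first by rewrite addn0.
rewrite blocksS walk_cat walk_cons -round_next -addSnnS => /IHm q_blocks.
by rewrite mem_cat inE q_blocks !orbT.
Qed.

(* The rounds b, ..., b + m with their separating flips form a greedy walk;
   each separating flip n.+1 reaches a new round, smaller flips revisit the
   current one. *)
Lemma blocks_greedy m b : b + m < N -> greedy (flip k) (visited b) (blocks m) (s b).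
Proof.
elim: m b => [|m IHm] b bm_lt; first by apply: round_greedy; rewrite addn0 in bm_lt.
rewrite blocksS; apply/greedy_cat; split; first by apply: round_greedy; lia.
have visited_next :
  rcons (visited b ++ walk_states (flip k) sg (s b)) (final sg (s b)) = visited b.+1.
  by rewrite rcons_cat visitedS.
split; rewrite visited_next -?round_next.
- apply/negP => /visited_entry [c c_lt same].
  by have := iter_pull_inj valid_p n_lt (_ : b.+1 < N) (_ : c < N) same; lia.
- move=> j j_lt; rewrite visitedS mem_cat; apply/orP; right.
  have [valid_b size_b] := round_valid b; have [_ closed _] := IH valid_b (ltnW size_b).
  by apply: closed; lia.
- by apply: IHm; lia.
Qed.

(* sigma k n.+1 is the walk of all N rounds; its last round is closed under
   flips up to n, and the final flip n.+1 performs the N-th pull, restoring p. *)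
Lemma sigma_cycle_step :
  [/\ greedy (flip k) [::] (sigma k n.+1) p,
      forall j, 0 < j <= n.+1 ->
        flip k j (final (sigma k n.+1) p) \in trail (sigma k n.+1) p
    & flip k n.+1 (final (sigma k n.+1) p) = p].
Proof.
have N_gt0 : 0 < N by rewrite muln_gt0 k_gt0.
have sigma_blocks : sigma k n.+1 = blocks N.-1 by rewrite sigmaS.
have back : flip k n.+1 (final (sigma k n.+1) p) = p.
  rewrite sigma_blocks (blocks_end _ 0) -round_next prednK //.
  by apply: iter_pull_period.
split => //.
  rewrite sigma_blocks; change (greedy (flip k) (visited 0) (blocks N.-1) (s 0)).
  by apply: blocks_greedy; lia.
move=> j /andP [j_gt0]; rewrite leq_eqVlt => /orP [/eqP -> | j_lt].
  by rewrite back mem_walk_head.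
have [valid_last size_last] := round_valid N.-1.
have [_ closed _] := IH valid_last (ltnW size_last).
rewrite sigma_blocks (blocks_end _ 0); apply: (blocks_trail (b := 0)).
by rewrite add0n; apply: closed; rewrite j_gt0.
Qed.

End CycleStep.

Lemma sigma_cycle_all n : sigma_cycle n.
Proof.
elim: n => [|n IH]; first exact: sigma_cycle0.
by move=> p valid_p n_lt; apply: sigma_cycle_step.
Qed.

End Flips.

Section GreedyList.
Variables (n k : nat).

Lemma greedy_step_det G G' t : greedy_step n k G t -> greedy_step n k G' t ->
  take t.+1 G = take t.+1 G' -> nth [::] G t.+1 = nth [::] G' t.+1.
Proof.
case=> [i [i_range next fresh least]] [i' [i'_range next' fresh' least']] same_prefix.
have same_state : nth [::] G t = nth [::] G' t.
  by rewrite -(nth_take [::] (ltnSn t) G) -(nth_take [::] (ltnSn t) G') same_prefix.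
rewrite next next' same_state; congr flip.
apply/eqP; rewrite eqn_leq; apply/andP; split; rewrite leqNgt; apply/negP => lt.
- by move/negP: fresh'; apply; rewrite -same_prefix -same_state; apply: least; lia.
- by move/negP: fresh; apply; rewrite same_prefix same_state; apply: least'; lia.
Qed.

Lemma greedy_list_prefix G G' : greedy_list n k G -> greedy_list n k G' ->
  forall t, t < size G -> t < size G' -> take t.+1 G = take t.+1 G'.
Proof.
case=> _ start_G steps_G _ [_ start_G' steps_G' _].
elim=> [|t IH] t_G t_G'.
  by rewrite (take_nth [::] t_G) (take_nth [::] t_G') !take0 start_G start_G'.
rewrite (take_nth [::] t_G) (take_nth [::] t_G') IH ?(ltnW t_G) ?(ltnW t_G') //.
congr rcons; apply: greedy_step_det; rewrite ?IH ?(ltnW t_G) ?(ltnW t_G') //.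
- by apply: steps_G; lia.
- by apply: steps_G'; lia.
Qed.

(* The greedy list is unique: a longer greedy list would extend the shorter
   one although all flips of its last entry are already visited. *)
Lemma greedy_list_unique G G' : greedy_list n k G -> greedy_list n k G' -> G = G'.
Proof.
wlog size_le : G G' / size G <= size G'.
  move=> sym gG gG'; case: (leqP (size G) (size G')) => [le | /ltnW le].
    exact: sym.
  exact/esym/sym.
move=> gG gG'; have [G_nil _ _ closed] := gG; have [_ _ steps_G' _] := gG'.
set m := (size G).-1.
have size_G : size G = m.+1 by rewrite prednK // lt0n size_eq0; apply/eqP.
have take_G : take m.+1 G' = G.
  by rewrite -(greedy_list_prefix gG gG') ?take_oversize ?size_G //; lia.
suff : size G' <= size G by move=> size_ge; rewrite -take_G take_oversize // -size_G.
rewrite leqNgt; apply/negP => lt.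
have [i [i_range _ fresh _]] := steps_G' m ltac:(lia).
move: fresh; rewrite -(nth_take [::] (ltnSn m) G') take_G nth_last closed //.
Qed.

End GreedyList.

Lemma valid_start n k : 0 < k -> valid k (start n).
Proof.
move=> k_gt0; apply/andP; split.
  by rewrite /start -map_comp map_id iota_uniq.
by apply/allP => x /mapP [v _ ->].
Qed.

Lemma size_start n : size (start n) = n.
Proof. by rewrite size_map size_iota. Qed.

Lemma greedy_list_walk n k fs :
  all (fun f => 0 < f <= n) fs -> greedy (flip k) [::] fs (start n) ->
  (forall i, 0 < i <= n ->
     flip k i (walk_end (flip k) fs (start n)) \in walk (flip k) fs (start n)) ->
  greedy_list n k (walk (flip k) fs (start n)).
Proof.
move=> fs_range greedy_fs closed; split.
- by move/(congr1 size); rewrite size_walk.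
- exact: nth_walk0.
- move=> t; rewrite size_walk => t_lt.
  have [next fresh least] := greedy_nth [::] greedy_fs t_lt.
  exists (nth 0 fs t); split => //.
  exact: (allP fs_range) _ (mem_nth 0 t_lt).
- by rewrite /walk last_rcons.
Qed.

Theorem lemma4 (n k : nat) (hn : 1 <= n) (hk : 1 <= k) :
  (exists G, greedy_list n k G) /\
  forall G, greedy_list n k G ->
    size (sigma k n) = (size G).-1 /\
    forall t, t < (size G).-1 ->
      nth [::] G t.+1 = flip k (nth 0 (sigma k n) t) (nth [::] G t).
Proof.
have [greedy_sigma closed _] :=
  sigma_cycle_all hk (valid_start n hk) (eq_leq (esym (size_start n))).
have greedy_G0 := greedy_list_walk (sigma_range k n) greedy_sigma closed.
split; first by eexists; exact: greedy_G0.
move=> G /(greedy_list_unique greedy_G0) <-; rewrite size_walk; split => // t t_lt.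
by have [] := greedy_nth [::] greedy_sigma t_lt.
Qed.
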